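(* Let $A>0$ and let $c:[0,1]\times S^1\to\mathbb R^2$ be a smooth path in $\mathrm{Imm}(S^1,\mathbb R^2)$ and $L>0$ such that for all $t,\theta$: $|c_\theta(t,\theta)|=\ell(t)/2\pi$ where $\ell(t)=\ell(c(t,\cdot))$; $\langle c_t,c_\theta\rangle(t,0)=0$; and $\int_{S^1}(1+A\kappa_{c(t)}^2)\langle c_t,ic_\theta\rangle^2\,d\theta/|c_\theta|=L^2$. Let $\ell_{\max}=\max_t\ell(t)$, $\ell_{\min}=\min_t\ell(t)$. Then $$|c(t_1,\theta_1)-c(t_2,\theta_2)|\le\frac{\ell_{\max}}{2\pi}|\theta_1-\theta_2|+7\big(\ell_{\max}^{3/4}A^{-1/4}+\ell_{\max}^{1/4}\big)\sqrt{L|t_1-t_2|}$$ whenever $|t_1-t_2|\le\min(2\sqrt{A\ell_{\min}},\ell_{\min}^{3/2})/(8L)$.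
   Context: $S^1=\mathbb R/2\pi\mathbb Z$ (with $|\theta_1-\theta_2|$ the distance of representatives in $[0,2\pi]$), $\mathbb R^2\cong\mathbb C$. $\mathrm{Imm}(S^1,\mathbb R^2)$ is the space of smooth immersions; a smooth path is a jointly smooth map $c(t,\theta)$ with each $c(t,\cdot)$ an immersion. $\ell(c)=\int_{S^1}|c_\theta|d\theta$, $\kappa_c=\det(c_\theta,c_{\theta\theta})/|c_\theta|^3$. *)

From Stdlib Require Import Reals.
From Coquelicot Require Import Coquelicot.
Open Scope R_scope.

(* Joint smoothness (C^infinity) of a real function of two real variables:
   a family D i j (meant to be d^i/dt^i d^j/dtheta^j f) with D 0 0 = f,
   each D i j has partial derivatives D (i+1) j in the first variable and
   D i (j+1) in the second variable, and each D i j is jointly continuous. *)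
Definition smooth2 (f : R -> R -> R) : Prop :=
  exists D : nat -> nat -> R -> R -> R,
    D O O = f /\
    forall (i j : nat) (t s : R),
      is_derive (fun u => D i j u s) t (D (S i) j t s) /\
      is_derive (fun v => D i j t v) s (D i (S j) t s) /\
      continuous (fun p : R * R => D i j (fst p) (snd p)) (t, s).

Definition path := R -> R -> R * R.

Definition cx (c : path) t s := fst (c t s).
Definition cy (c : path) t s := snd (c t s).

(* smooth path c : R x S^1 -> R^2 (2 pi-periodic in theta) *)
Definition smooth_path (c : path) : Prop :=
  smooth2 (cx c) /\ smooth2 (cy c) /\
  forall t s, c t (s + 2 * PI) = c t s.

Definition d_th (f : R -> R -> R) t s := Derive (fun v => f t v) s.
Definition d_t (f : R -> R -> R) t s := Derive (fun u => f u s) t.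

Definition speed (c : path) t s :=
  sqrt (d_th (cx c) t s ^ 2 + d_th (cy c) t s ^ 2).

Definition immersion_at (c : path) t : Prop :=
  forall s, (d_th (cx c) t s, d_th (cy c) t s) <> (0, 0).

Definition len (c : path) t := RInt (fun s => speed c t s) 0 (2 * PI).

Definition curv (c : path) t s :=
  (d_th (cx c) t s * d_th (d_th (cy c)) t s
   - d_th (cy c) t s * d_th (d_th (cx c)) t s) / speed c t s ^ 3.

Definition tang_vel (c : path) t s :=
  d_t (cx c) t s * d_th (cx c) t s + d_t (cy c) t s * d_th (cy c) t s.

(* <c_t, i c_theta>, with i c_theta = (- y_theta, x_theta) *)
Definition norm_vel (c : path) t s :=
  d_t (cx c) t s * (- d_th (cy c) t s) + d_t (cy c) t s * d_th (cx c) t s.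

Definition dist2 (p q : R * R) :=
  sqrt ((fst p - fst q) ^ 2 + (snd p - snd q) ^ 2).

(* Write sigma(t) = l(t)/2pi for the constant speed and split c_t into its tangential part
   tau = <c_t, c_th> and normal part nu = <c_t, i c_th>.  At constant speed c_thth is normal to
   c_th, so the energy identity reads  int nu^2/sigma + A int h^2/sigma^3 = L^2  with
   h = <c_t, c_thth>.  Since d/dth tau = 1/2 d/dt sigma^2 + h, and tau vanishes at th = 0 and is
   periodic, 1/2 d/dt sigma^2 is minus the mean of h and
   |tau| <= 2 int |h| <= 2 sqrt(2 pi sigma^3 L^2/A).
   Thus sqrt sigma is Lipschitz in t and sigma changes by a bounded factor over the admissible
   time steps, while |c_t|^2 = (tau^2 + nu^2)/sigma^2 integrates over a th-window of width delta to
   at most K^2 = O(delta l_max L^2/A + L^2/sigma).  A Gronwall argument bounds the L^2 distance of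
   c(t_a, .) and c(t_b, .) on the window by K |t_b - t_a|, and the th-Lipschitz bound sigma then
   gives |c(t_b, th) - c(t_a, th)| <= 2 sigma delta + K |t_b - t_a| / sqrt delta.  The choice
   delta = sqrt(L |t_b - t_a|) / sigma^(3/4) yields the time term. *)

From Stdlib Require Import Reals Lra Psatz.
From Coquelicot Require Import Coquelicot.
Open Scope R_scope.

Lemma is_derive_Rconst (k x : R) : is_derive (fun _ : R => k) x 0.
Proof. apply (is_derive_const k x). Qed.

Lemma is_derive_Rplus (f g : R -> R) x df dg : is_derive f x df -> is_derive g x dg ->
  is_derive (fun y => f y + g y) x (df + dg).
Proof. intros; apply (is_derive_plus f g); auto. Qed.

Lemma is_derive_Rminus (f g : R -> R) x df dg : is_derive f x df -> is_derive g x dg ->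
  is_derive (fun y => f y - g y) x (df - dg).
Proof. intros; apply (is_derive_minus f g); auto. Qed.

Lemma is_derive_Rmult (f g : R -> R) x df dg : is_derive f x df -> is_derive g x dg ->
  is_derive (fun y => f y * g y) x (df * g x + f x * dg).
Proof. intros; apply (is_derive_mult f g); auto. intros; apply Rmult_comm. Qed.

Lemma is_derive_Rsqr (f : R -> R) x df : is_derive f x df ->
  is_derive (fun y => f y ^ 2) x (2 * f x * df).
Proof.
  intros H. apply (is_derive_ext (fun y => f y * f y)); [intros; simpl; ring|].
  replace (2 * f x * df) with (df * f x + f x * df) by ring.
  apply is_derive_Rmult; exact H.
Qed.

Lemma ex_RInt_Rplus (f g : R -> R) a b : ex_RInt f a b -> ex_RInt g a b ->
  ex_RInt (fun x => f x + g x) a b.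
Proof. intros; apply (ex_RInt_plus f g); auto. Qed.

Lemma ex_RInt_Rscal (f : R -> R) a b l : ex_RInt f a b -> ex_RInt (fun x => l * f x) a b.
Proof. intros; apply (ex_RInt_scal f); auto. Qed.

Lemma RInt_Rplus (f g : R -> R) a b : ex_RInt f a b -> ex_RInt g a b ->
  RInt (fun x => f x + g x) a b = RInt f a b + RInt g a b.
Proof. intros; apply (RInt_plus f g); auto. Qed.

Lemma RInt_Rscal (f : R -> R) a b l : ex_RInt f a b ->
  RInt (fun x => l * f x) a b = l * RInt f a b.
Proof. intros; apply (RInt_scal f); auto. Qed.

Lemma RInt_Rconst a b k : RInt (fun _ => k) a b = (b - a) * k.
Proof. rewrite RInt_const. reflexivity. Qed.

Lemma RInt_Rle (f g : R -> R) a b : a <= b -> ex_RInt f a b -> ex_RInt g a b ->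
  (forall x, a <= x <= b -> f x <= g x) -> RInt f a b <= RInt g a b.
Proof. intros Hab Hf Hg H; apply RInt_le; auto. intros x Hx; apply H; lra. Qed.

Lemma RInt_Rge0 (f : R -> R) a b : a <= b -> ex_RInt f a b ->
  (forall x, a <= x <= b -> 0 <= f x) -> 0 <= RInt f a b.
Proof. intros Hab Hf H; apply RInt_ge_0; auto. intros x Hx; apply H; lra. Qed.

Lemma RInt_Rle_sub (f : R -> R) a b c d : a <= c -> c <= d -> d <= b ->
  (forall x y, ex_RInt f x y) -> (forall x, a <= x <= b -> 0 <= f x) ->
  RInt f c d <= RInt f a b.
Proof.
  intros Hac Hcd Hdb Hex Hf.
  rewrite <- (RInt_Chasles f a c b), <- (RInt_Chasles f c d b) by apply Hex.
  repeat change (plus ?u ?v) with (u + v).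
  assert (0 <= RInt f a c) by (apply RInt_Rge0; auto; intros; apply Hf; lra).
  assert (0 <= RInt f d b) by (apply RInt_Rge0; auto; intros; apply Hf; lra).
  lra.
Qed.

Lemma MVT_le (f df : R -> R) a b M : a <= b ->
  (forall x, a <= x <= b -> is_derive f x (df x)) ->
  (forall x, a < x < b -> df x <= M) -> f b - f a <= M * (b - a).
Proof.
  intros Hab Hd HM. destruct (Req_dec a b) as [<-|Hne]; [lra|].
  assert (pr1 : forall x, a < x < b -> derivable_pt f x)
    by (intros x Hx; exists (df x); apply is_derive_Reals, Hd; lra).
  assert (pr2 : forall x, a < x < b -> derivable_pt id x) by (intros; apply derivable_pt_id).
  destruct (MVT f id a b pr1 pr2) as [x [Hx E]]; [lra| |intros; apply continuity_pt_id|].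
  - intros x Hx. apply continuity_pt_filterlim, (ex_derive_continuous f).
    exists (df x); apply Hd, Hx.
  - rewrite (derive_pt_eq_0 f x (df x) (pr1 x Hx)) in E by (apply is_derive_Reals, Hd; lra).
    rewrite (derive_pt_eq_0 id x 1 (pr2 x Hx)) in E by apply derivable_pt_lim_id.
    unfold id in E. specialize (HM x Hx). nra.
Qed.

Lemma MVT_abs_le (f df : R -> R) a b K : a <= b ->
  (forall x, a <= x <= b -> is_derive f x (df x)) ->
  (forall x, a < x < b -> Rabs (df x) <= K) -> Rabs (f b - f a) <= K * (b - a).
Proof.
  intros Hab Hd HK. apply Rabs_le. split.
  - enough (- f b - - f a <= K * (b - a)) by lra.
    apply (MVT_le (fun x => - f x) (fun x => - df x)); auto.
    + intros x Hx. apply (is_derive_opp f), Hd, Hx.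
    + intros x Hx. specialize (HK x Hx). apply Rabs_le_between in HK. lra.
  - apply (MVT_le f df); auto.
    intros x Hx. specialize (HK x Hx). apply Rabs_le_between in HK. lra.
Qed.

Lemma Rabs_le_of_sqr x y : 0 <= y -> x ^ 2 <= y ^ 2 -> Rabs x <= y.
Proof. intros Hy H. rewrite <- (pow2_abs x) in H. pose proof (Rabs_pos x). nra. Qed.

Lemma sqr_le_of_Rabs x y : Rabs x <= y -> x ^ 2 <= y ^ 2.
Proof. intros H. rewrite <- (pow2_abs x). pose proof (Rabs_pos x). nra. Qed.

Lemma pow4_le_reg a b : 0 <= b -> a ^ 4 <= b ^ 4 -> a <= b.
Proof.
  intros Hb H. destruct (Rle_dec a b) as [|Hab]; auto.
  assert (E : a ^ 4 - b ^ 4 = (a - b) * ((a + b) * (a ^ 2 + b ^ 2))) by ring.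
  assert (0 < (a - b) * ((a + b) * (a ^ 2 + b ^ 2))).
  { assert (0 < a ^ 2) by (apply pow_lt; lra). pose proof (pow2_ge_0 b).
    apply Rmult_lt_0_compat; [lra|]. apply Rmult_lt_0_compat; lra. }
  lra.
Qed.

Lemma sqrt_sqrt_pow4 x : 0 <= x -> sqrt (sqrt x) ^ 4 = x.
Proof.
  intros Hx. change 4%nat with (2 * 2)%nat.
  rewrite pow_mult, !pow2_sqrt; auto. apply sqrt_pos.
Qed.

Lemma Rpower_1_4 x : 0 < x -> Rpower x (1 / 4) = sqrt (sqrt x).
Proof.
  intros Hx. replace (1 / 4) with (/ 2 * / 2) by field.
  rewrite <- Rpower_mult, (Rpower_sqrt x Hx), Rpower_sqrt; auto. apply sqrt_lt_R0, Hx.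
Qed.

Lemma Rpower_3_4 x : 0 < x -> Rpower x (3 / 4) = sqrt (sqrt x) ^ 3.
Proof.
  intros Hx. replace (3 / 4) with (1 / 4 * INR 3) by (simpl; field).
  rewrite <- Rpower_mult, Rpower_1_4, Rpower_pow; auto.
  apply sqrt_lt_R0, sqrt_lt_R0, Hx.
Qed.

Lemma Rpower_3_2 x : 0 < x -> Rpower x (3 / 2) = x * sqrt x.
Proof.
  intros Hx. replace (3 / 2) with (1 + / 2) by field.
  rewrite Rpower_plus, Rpower_1, Rpower_sqrt; auto.
Qed.

Lemma sqrt_sum_sqr_triangle a b c d :
  sqrt ((a + b) ^ 2 + (c + d) ^ 2) <= sqrt (a ^ 2 + c ^ 2) + sqrt (b ^ 2 + d ^ 2).
Proof.
  assert (H1 : 0 <= a ^ 2 + c ^ 2) by nra. assert (H2 : 0 <= b ^ 2 + d ^ 2) by nra.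
  pose proof (sqrt_pos (a ^ 2 + c ^ 2)). pose proof (sqrt_pos (b ^ 2 + d ^ 2)).
  pose proof (pow2_sqrt _ H1). pose proof (pow2_sqrt _ H2).
  assert (CS : a * b + c * d <= sqrt (a ^ 2 + c ^ 2) * sqrt (b ^ 2 + d ^ 2)).
  { apply Rle_trans with (Rabs (a * b + c * d)); [apply Rle_abs|].
    apply Rabs_le_of_sqr; [nra|]. rewrite Rpow_mult_distr.
    pose proof (pow2_ge_0 (a * d - b * c)). nra. }
  rewrite <- (sqrt_pow2 (sqrt (a ^ 2 + c ^ 2) + sqrt (b ^ 2 + d ^ 2))) by lra.
  apply sqrt_le_1_alt. nra.
Qed.

(* Project onto the unit vector along the displacement and use the scalar mean value theorem. *)
Lemma planar_MVT (x y dx dy : R -> R) a b M : a <= b -> 0 <= M ->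
  (forall s, a <= s <= b -> is_derive x s (dx s)) ->
  (forall s, a <= s <= b -> is_derive y s (dy s)) ->
  (forall s, a < s < b -> dx s ^ 2 + dy s ^ 2 <= M ^ 2) ->
  sqrt ((x b - x a) ^ 2 + (y b - y a) ^ 2) <= M * (b - a).
Proof.
  intros Hab HM Hx Hy Hd.
  set (d := sqrt ((x b - x a) ^ 2 + (y b - y a) ^ 2)).
  assert (Hsq : 0 <= (x b - x a) ^ 2 + (y b - y a) ^ 2)
    by (apply Rplus_le_le_0_compat; apply pow2_ge_0).
  assert (Hd2 : d ^ 2 = (x b - x a) ^ 2 + (y b - y a) ^ 2) by (apply pow2_sqrt, Hsq).
  destruct (Req_dec d 0) as [E|Hne]; [rewrite E; nra|].
  assert (Hdp : 0 < d) by (assert (0 <= d) by apply sqrt_pos; lra).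
  set (u1 := (x b - x a) / d). set (u2 := (y b - y a) / d).
  assert (Hu : u1 ^ 2 + u2 ^ 2 = 1).
  { unfold u1, u2.
    replace (((x b - x a) / d) ^ 2 + ((y b - y a) / d) ^ 2)
      with (((x b - x a) ^ 2 + (y b - y a) ^ 2) / d ^ 2) by (field; lra).
    rewrite <- Hd2. field; lra. }
  replace d with ((u1 * x b + u2 * y b) - (u1 * x a + u2 * y a)).
  2: { unfold u1, u2.
       replace ((x b - x a) / d * x b + (y b - y a) / d * y b
                - ((x b - x a) / d * x a + (y b - y a) / d * y a))
         with (((x b - x a) ^ 2 + (y b - y a) ^ 2) / d) by (field; lra).
       rewrite <- Hd2. field; lra. }
  apply (MVT_le (fun s => u1 * x s + u2 * y s) (fun s => u1 * dx s + u2 * dy s)); auto.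
  - intros s Hs. apply is_derive_Rplus; apply (is_derive_scal (fun s => _)); auto.
  - intros s Hs. apply Rle_trans with (Rabs (u1 * dx s + u2 * dy s)); [apply Rle_abs|].
    apply Rabs_le_of_sqr; auto. specialize (Hd s Hs).
    pose proof (pow2_ge_0 (u1 * dy s - u2 * dx s)). nra.
Qed.

(* Pointwise AM-GM [|f| <= mu/2 + f^2/(2 mu)] with the optimal [mu]. *)
Lemma RInt_abs_le_sqrt (f : R -> R) a b B : a <= b -> 0 < B ->
  ex_RInt f a b -> ex_RInt (fun v => f v ^ 2) a b -> ex_RInt (fun v => Rabs (f v)) a b ->
  RInt (fun v => f v ^ 2) a b <= B ->
  RInt (fun v => Rabs (f v)) a b <= sqrt ((b - a) * B).
Proof.
  intros Hab HB E1 E2 E3 Hint. destruct (Req_dec a b) as [<-|Hne].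
  { rewrite RInt_point. apply sqrt_pos. }
  set (r := sqrt ((b - a) * B)).
  assert (Hr : 0 < r) by (apply sqrt_lt_R0; apply Rmult_lt_0_compat; lra).
  assert (Hr2 : r * r = (b - a) * B) by (apply sqrt_sqrt; nra).
  set (mu := r / (b - a)).
  assert (Hmu : 0 < mu) by (apply Rdiv_lt_0_compat; lra).
  assert (H : RInt (fun v => Rabs (f v)) a b <= RInt (fun v => mu / 2 + / (2 * mu) * f v ^ 2) a b).
  { apply RInt_Rle; auto.
    { apply ex_RInt_Rplus; [apply ex_RInt_const | apply ex_RInt_Rscal, E2]. }
    intros x _. rewrite <- (pow2_abs (f x)).
    pose proof (pow2_ge_0 (Rabs (f x) - mu)).
    apply Rmult_le_reg_l with (2 * mu); [lra|].
    replace (2 * mu * (mu / 2 + / (2 * mu) * Rabs (f x) ^ 2)) with (mu * mu + Rabs (f x) ^ 2)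
      by (field; lra).
    nra. }
  rewrite RInt_Rplus, RInt_Rconst, RInt_Rscal in H;
    [| exact E2 | apply ex_RInt_const | apply ex_RInt_Rscal, E2].
  assert (/ (2 * mu) * RInt (fun v => f v ^ 2) a b <= / (2 * mu) * B)
    by (apply Rmult_le_compat_l; [left; apply Rinv_0_lt_compat; lra | exact Hint]).
  assert (E : (b - a) * (mu / 2) + / (2 * mu) * B = r).
  { replace B with (r * r / (b - a)) by (rewrite Hr2; field; lra).
    unfold mu. field. split; lra. }
  lra.
Qed.

Lemma ex_RInt_of_continuous (g : R -> R) a b : (forall s, continuous g s) -> ex_RInt g a b.
Proof. intros Hg. apply (@ex_RInt_continuous R_CompleteNormedModule). intros; apply Hg. Qed.

Section ZeroEndsPrimitive.
Variables (f h : R -> R) (C p : R).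
Hypothesis Hp : 0 < p.
Hypothesis Hf : forall s, is_derive f s (C + h s).
Hypothesis Hh : forall s, continuous h s.
Hypothesis Hf0 : f 0 = 0.
Hypothesis Hfp : f p = 0.

Lemma zero_ends_primitive s : f s = s * C + RInt h 0 s.
Proof.
  assert (H := is_RInt_derive f (fun v => C + h v) 0 s (fun v _ => Hf v)).
  apply is_RInt_unique in H.
  - rewrite RInt_Rplus, RInt_Rconst in H; [|apply ex_RInt_const|apply ex_RInt_of_continuous, Hh].
    change (minus (f s) (f 0)) with (f s - f 0) in H. rewrite Hf0 in H. lra.
  - intros v _. apply (continuous_plus (fun _ => C) h); [apply continuous_const | apply Hh].
Qed.

Lemma zero_ends_slope : C = - RInt h 0 p / p.
Proof. pose proof (zero_ends_primitive p) as E. rewrite Hfp in E. field_simplify_eq; lra. Qed.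

Lemma zero_ends_abs_le s : 0 <= s <= p -> Rabs (f s) <= 2 * RInt (fun v => Rabs (h v)) 0 p.
Proof.
  intros Hs.
  assert (Habs : forall u v, ex_RInt (fun w => Rabs (h w)) u v)
    by (intros; apply ex_RInt_of_continuous; intros; apply continuous_Rabs_comp, Hh).
  assert (Hint : forall u, 0 <= u <= p -> Rabs (RInt h 0 u) <= RInt (fun v => Rabs (h v)) 0 p).
  { intros u Hu. eapply Rle_trans; [apply abs_RInt_le; [lra | apply ex_RInt_of_continuous, Hh]|].
    apply RInt_Rle_sub; auto; try lra. intros; apply Rabs_pos. }
  rewrite zero_ends_primitive, zero_ends_slope.
  replace (s * (- RInt h 0 p / p)) with (- (s / p * RInt h 0 p)) by (field; lra).
  assert (Hsp : 0 <= s / p <= 1).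
  { split; [apply Rdiv_le_0_compat; lra|].
    apply Rmult_le_reg_r with p; [lra|]. unfold Rdiv. rewrite Rmult_assoc, Rinv_l; lra. }
  eapply Rle_trans; [apply Rabs_triang|]. rewrite Rabs_Ropp, Rabs_mult, (Rabs_right (s / p)) by lra.
  pose proof (Hint s Hs). pose proof (Hint p ltac:(lra)). pose proof (Rabs_pos (RInt h 0 p)).
  nra.
Qed.

End ZeroEndsPrimitive.

(* [sqrt (G + y^2)] grows at rate at most [K]; then let [y -> 0]. *)
Lemma sqrt_growth_le (G dG : R -> R) a b K : a <= b -> 0 < K ->
  (forall T, a <= T <= b -> is_derive G T (dG T)) ->
  (forall T, a <= T <= b -> 0 <= G T) -> G a = 0 ->
  (forall T lam, a < T < b -> 0 < lam -> dG T <= lam * G T + K ^ 2 / lam) ->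
  G b <= (K * (b - a)) ^ 2.
Proof.
  intros Hab HK HdG HG0 Ha Hd.
  set (M := K * (b - a)). assert (HM : 0 <= M) by (unfold M; nra).
  assert (Hroot : forall y, 0 < y -> sqrt (G b + y ^ 2) <= y + M).
  { intros y Hy.
    enough (sqrt (G b + y ^ 2) - sqrt (G a + y ^ 2) <= M)
      by (rewrite Ha, Rplus_0_l, sqrt_pow2 in H; lra).
    apply (MVT_le (fun T => sqrt (G T + y ^ 2)) (fun T => dG T / (2 * sqrt (G T + y ^ 2)))); auto.
    - intros T HT. rewrite <- (Rplus_0_r (dG T)).
      apply (is_derive_sqrt (fun T => G T + y ^ 2)).
      + apply is_derive_Rplus; [apply HdG, HT | apply is_derive_Rconst].
      + pose proof (HG0 T HT). nra.
    - intros T HT. pose proof (HG0 T ltac:(lra)) as HGT.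
      set (s := sqrt (G T + y ^ 2)).
      assert (Hs : 0 < s) by (apply sqrt_lt_R0; nra).
      assert (Hs2 : s * s = G T + y ^ 2) by (apply sqrt_sqrt; nra).
      specialize (Hd T (K / s) HT (Rdiv_lt_0_compat _ _ HK Hs)).
      replace (K ^ 2 / (K / s)) with (K * s) in Hd by (field; lra).
      assert (K / s * G T <= K * s).
      { apply Rmult_le_reg_l with s; [lra|].
        replace (s * (K / s * G T)) with (K * G T) by (field; lra). nra. }
      apply Rmult_le_reg_r with (2 * s); [lra|].
      replace (dG T / (2 * s) * (2 * s)) with (dG T) by (field; lra). lra. }
  apply Rle_plus_epsilon. intros e He.
  set (y := e / (1 + 2 * M)). assert (Hy : 0 < y) by (apply Rdiv_lt_0_compat; lra).
  assert (Hye : y * (1 + 2 * M) = e) by (unfold y; field; lra).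
  assert (H2 : G b + y ^ 2 <= (y + M) ^ 2).
  { rewrite <- (pow2_sqrt (G b + y ^ 2)) by (pose proof (HG0 b ltac:(lra)); nra).
    apply pow_incr. split; [apply sqrt_pos | apply Hroot, Hy]. }
  nra.
Qed.

Lemma is_derive_eq_fun (g1 g2 : R -> R) x l1 l2 :
  (forall y, g1 y = g2 y) -> is_derive g1 x l1 -> is_derive g2 x l2 -> l1 = l2.
Proof.
  intros E H1 H2. rewrite <- (is_derive_unique g2 x l1), (is_derive_unique g2 x l2); auto.
  apply (is_derive_ext g1); auto.
Qed.

Lemma is_derive_periodic (g : R -> R) p s l l' :
  (forall v, g (v + p) = g v) -> is_derive g (s + p) l -> is_derive g s l' -> l = l'.
Proof.
  intros Hg Hl Hl'. apply (is_derive_eq_fun (fun v => g (v + p)) g s); auto.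
  replace l with (scal 1 l) by (change (1 * l = l); ring).
  apply (is_derive_comp g (fun v => v + p)); auto.
  auto_derive; auto.
Qed.

Lemma continuity_2d_pt_pow (f : R -> R -> R) x y n :
  continuity_2d_pt f x y -> continuity_2d_pt (fun u v => f u v ^ n) x y.
Proof.
  intros H; induction n as [|n IH]; simpl.
  - apply continuity_2d_pt_const.
  - apply (continuity_2d_pt_mult f (fun u v => f u v ^ n)); auto.
Qed.

Lemma continuity_2d_pt_freeze (f : R -> R -> R) t u v :
  continuity_2d_pt f t v -> continuity_2d_pt (fun _ v => f t v) u v.
Proof.
  intros H eps. destruct (H eps) as [d Hd]. exists d. intros u' v' _ Hv.
  apply Hd; auto. rewrite Rminus_eq_0, Rabs_R0; apply cond_pos.
Qed.

Lemma continuous_slice (f : R -> R -> R) t v :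
  continuity_2d_pt f t v -> continuous (fun v => f t v) v.
Proof.
  intros H. apply continuity_pt_filterlim. intros eps Heps.
  destruct (H (mkposreal eps Heps)) as [d Hd]. exists d. split; [apply cond_pos|].
  intros z [_ Hz]. apply Hd; [rewrite Rminus_eq_0, Rabs_R0; apply cond_pos | exact Hz].
Qed.

Lemma ex_RInt_slice (f : R -> R -> R) t a b :
  (forall u v, continuity_2d_pt f u v) -> ex_RInt (fun v => f t v) a b.
Proof. intros H. apply ex_RInt_of_continuous. intros; apply continuous_slice, H. Qed.

(** * Arithmetic of the final estimate *)

Lemma window_exists de p th : 0 <= de <= p -> 0 <= th <= p ->
  exists al, 0 <= al /\ al + de <= p /\ al <= th <= al + de.
Proof.
  intros Hde Hth. destruct (Rle_dec (th + de) p).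
  - exists th. lra.
  - exists (p - de). lra.
Qed.

Lemma time_step_small l dt a lmin : 0 < l -> 0 < a -> 0 < lmin -> 0 <= dt ->
  dt <= Rmin (2 * sqrt (a * lmin)) (Rpower lmin (3 / 2)) / (8 * l) ->
  (l * dt) ^ 2 <= a * lmin / 16 /\ (l * dt) ^ 2 <= lmin ^ 3 / 64.
Proof.
  intros Hl Ha Hlmin Hdt H.
  assert (Hm : l * dt <= Rmin (2 * sqrt (a * lmin)) (Rpower lmin (3 / 2)) / 8).
  { apply Rmult_le_reg_r with (/ l); [apply Rinv_0_lt_compat, Hl|].
    replace (l * dt * / l) with dt by (field; lra).
    replace (_ / 8 * / l) with (Rmin (2 * sqrt (a * lmin)) (Rpower lmin (3 / 2)) / (8 * l))
      by (field; lra).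
    exact H. }
  pose proof (Rmin_l (2 * sqrt (a * lmin)) (Rpower lmin (3 / 2))).
  pose proof (Rmin_r (2 * sqrt (a * lmin)) (Rpower lmin (3 / 2))).
  rewrite Rpower_3_2 in * by exact Hlmin.
  assert (0 <= l * dt) by nra.
  split.
  - apply Rle_trans with ((2 * sqrt (a * lmin) / 8) ^ 2); [apply pow_incr; lra|].
    replace ((2 * sqrt (a * lmin) / 8) ^ 2) with (sqrt (a * lmin) ^ 2 / 16) by field.
    rewrite pow2_sqrt by nra. lra.
  - apply Rle_trans with ((lmin * sqrt lmin / 8) ^ 2); [apply pow_incr; lra|].
    replace ((lmin * sqrt lmin / 8) ^ 2) with (lmin ^ 2 * sqrt lmin ^ 2 / 64) by field.
    rewrite pow2_sqrt by lra. apply Req_le. field.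
Qed.

Lemma window_width_le lam X lmin : 0 < lam -> 0 < X -> lmin <= 2 * PI * lam ->
  X ^ 2 <= lmin ^ 3 / 64 -> sqrt X / sqrt (sqrt lam) ^ 3 <= 9 / 4.
Proof.
  intros Hlam HX Hl HX2. pose proof PI_RGT_0. pose proof PI_4.
  set (q := sqrt (sqrt lam)). assert (Hq : 0 < q) by (apply sqrt_lt_R0, sqrt_lt_R0, Hlam).
  assert (Hq4 : q ^ 4 = lam) by (apply sqrt_sqrt_pow4; lra).
  apply pow4_le_reg; [lra|].
  replace ((sqrt X / q ^ 3) ^ 4) with ((sqrt X ^ 2) ^ 2 / (q ^ 4) ^ 3) by (field; lra).
  rewrite pow2_sqrt, Hq4 by lra.
  assert (Hlam3 : 0 < lam ^ 3) by (apply pow_lt, Hlam).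
  apply Rmult_le_reg_r with (lam ^ 3); [exact Hlam3|].
  replace (X ^ 2 / lam ^ 3 * lam ^ 3) with (X ^ 2) by (field; lra).
  assert (0 <= lmin) by nra.
  assert (lmin ^ 3 <= (2 * PI * lam) ^ 3) by (apply pow_incr; lra).
  assert (PI ^ 3 <= 4 ^ 3) by (apply pow_incr; lra).
  replace ((2 * PI * lam) ^ 3) with (8 * PI ^ 3 * lam ^ 3) in * by ring.
  nra.
Qed.

(* The window width [de = sqrt X / lam^(3/4)] balances the two error terms of
   [gap_time_window]; here [q = lam^(1/4)], [y = sqrt X] and [lam * de = q * y]. *)
Lemma gap_time_algebra lam X lmax a S D : 0 < lam <= lmax -> 0 < X -> 0 < a ->
  sqrt X / sqrt (sqrt lam) ^ 3 <= 9 / 4 -> 0 <= S <= 145 / 64 * lam ->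
  D <= S * (sqrt X / sqrt (sqrt lam) ^ 3)
       + sqrt ((sqrt X / sqrt (sqrt lam) ^ 3 * (4 * lmax / a) * X ^ 2 + 64 / 49 * X ^ 2 / lam)
               / (sqrt X / sqrt (sqrt lam) ^ 3)) ->
  D <= 4 * sqrt (sqrt lmax) * sqrt X + 2 * X * sqrt (lmax / a).
Proof.
  intros Hlam HX Ha Hde HS HD.
  set (q := sqrt (sqrt lam)) in *. set (y := sqrt X) in *.
  assert (Hq : 0 < q) by (apply sqrt_lt_R0, sqrt_lt_R0; lra).
  assert (Hq4 : q ^ 4 = lam) by (apply sqrt_sqrt_pow4; lra).
  assert (Hy : 0 < y) by (apply sqrt_lt_R0, HX).
  assert (Hy2 : y ^ 2 = X) by (apply pow2_sqrt; lra).
  assert (Hr2 : sqrt (lmax / a) ^ 2 = lmax / a) by (apply pow2_sqrt, Rlt_le, Rdiv_lt_0_compat; lra).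
  set (T3 := 2 * X * sqrt (lmax / a)).
  assert (HT3 : 0 <= T3) by (pose proof (sqrt_pos (lmax / a)); unfold T3; nra).
  assert (Hinner : (y / q ^ 3 * (4 * lmax / a) * X ^ 2 + 64 / 49 * X ^ 2 / lam) / (y / q ^ 3)
                   <= (T3 + 12 / 7 * (q * y)) ^ 2).
  { rewrite <- Hq4, <- Hy2.
    replace ((y / q ^ 3 * (4 * lmax / a) * (y ^ 2) ^ 2 + 64 / 49 * (y ^ 2) ^ 2 / q ^ 4)
             / (y / q ^ 3))
      with (T3 ^ 2 + 64 / 49 * y ^ 3 / q)
      by (unfold T3; rewrite Rpow_mult_distr, Hr2, <- Hy2; field; lra).
    assert (64 / 49 * y ^ 3 / q <= (12 / 7 * (q * y)) ^ 2).
    { apply Rmult_le_reg_r with (q / y ^ 2); [apply Rdiv_lt_0_compat; nra|].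
      replace (64 / 49 * y ^ 3 / q * (q / y ^ 2)) with (64 / 49 * y) by (field; lra).
      replace ((12 / 7 * (q * y)) ^ 2 * (q / y ^ 2)) with (144 / 49 * q ^ 3) by (field; lra).
      apply Rmult_le_reg_r with (/ q ^ 3); [apply Rinv_0_lt_compat, pow_lt, Hq|].
      replace (144 / 49 * q ^ 3 * / q ^ 3) with (144 / 49) by (field; lra).
      unfold Rdiv in Hde. nra. }
    assert (0 <= 2 * T3 * (12 / 7 * (q * y))) by (apply Rmult_le_pos; nra).
    replace ((T3 + 12 / 7 * (q * y)) ^ 2)
      with (T3 ^ 2 + 2 * T3 * (12 / 7 * (q * y)) + (12 / 7 * (q * y)) ^ 2) by ring.
    lra. }
  assert (Hsq : sqrt ((y / q ^ 3 * (4 * lmax / a) * X ^ 2 + 64 / 49 * X ^ 2 / lam) / (y / q ^ 3))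
                <= T3 + 12 / 7 * (q * y)).
  { rewrite <- (sqrt_pow2 (T3 + 12 / 7 * (q * y))) by nra. apply sqrt_le_1_alt, Hinner. }
  assert (HSde : S * (y / q ^ 3) <= 145 / 64 * (q * y)).
  { replace (145 / 64 * (q * y)) with (145 / 64 * lam * (y / q ^ 3))
      by (rewrite <- Hq4; field; lra).
    apply Rmult_le_compat_r; [apply Rlt_le, Rdiv_lt_0_compat; [|apply pow_lt]|]; lra. }
  assert (Hqm : q <= sqrt (sqrt lmax)) by (apply sqrt_le_1_alt, sqrt_le_1_alt; lra).
  unfold T3 in *. nra.
Qed.

Lemma time_term_le X lmax a : 0 <= X -> 0 < lmax -> 0 < a -> X ^ 2 <= a * lmax / 16 ->
  4 * sqrt (sqrt lmax) * sqrt X + 2 * X * sqrt (lmax / a) <=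
  7 * (Rpower lmax (3 / 4) * Rpower a (- (1 / 4)) + Rpower lmax (1 / 4)) * sqrt X.
Proof.
  intros HX Hl Ha HX2.
  rewrite Rpower_3_4, Rpower_Ropp, Rpower_1_4, Rpower_1_4 by lra.
  set (m := sqrt (sqrt lmax)). set (q := sqrt (sqrt a)). set (y := sqrt X).
  assert (Hm : 0 < m) by (apply sqrt_lt_R0, sqrt_lt_R0, Hl).
  assert (Hq : 0 < q) by (apply sqrt_lt_R0, sqrt_lt_R0, Ha).
  assert (Hy : 0 <= y) by apply sqrt_pos.
  assert (Hm4 : m ^ 4 = lmax) by (apply sqrt_sqrt_pow4; lra).
  assert (Hq4 : q ^ 4 = a) by (apply sqrt_sqrt_pow4; lra).
  assert (Hy2 : y ^ 2 = X) by (apply pow2_sqrt, HX).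
  assert (Hs : sqrt (lmax / a) = m ^ 2 / q ^ 2).
  { rewrite <- Hm4, <- Hq4. replace (m ^ 4 / q ^ 4) with ((m ^ 2 / q ^ 2) ^ 2) by (field; lra).
    apply sqrt_pow2, Rlt_le, Rdiv_lt_0_compat; apply pow_lt; lra. }
  assert (Hyq : y <= q * m / 2).
  { apply pow4_le_reg; [nra|]. replace (y ^ 4) with (X ^ 2) by (rewrite <- Hy2; ring).
    replace ((q * m / 2) ^ 4) with (a * lmax / 16) by (rewrite <- Hm4, <- Hq4; field). exact HX2. }
  rewrite Hs, <- Hy2.
  replace (2 * y ^ 2 * (m ^ 2 / q ^ 2)) with ((2 * y) * (m ^ 2 / q ^ 2) * y) by ring.
  replace (7 * (m ^ 3 * / q + m) * y) with ((7 * m * q) * (m ^ 2 / q ^ 2) * y + 7 * m * y)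
    by (field; lra).
  assert (0 < m ^ 2 / q ^ 2) by (apply Rdiv_lt_0_compat; apply pow_lt; lra).
  assert (2 * y * (m ^ 2 / q ^ 2) * y <= 7 * m * q * (m ^ 2 / q ^ 2) * y).
  { apply Rmult_le_compat_r; [exact Hy|]. apply Rmult_le_compat_r; [lra|]. nra. }
  nra.
Qed.

(** * A closed curve moving at constant speed *)

Section ConstantSpeedFamily.

Variable c : path.
Variables Dx Dy : nat -> nat -> R -> R -> R.
Hypothesis Dx00 : Dx O O = cx c.
Hypothesis Dy00 : Dy O O = cy c.
Hypothesis HDx : forall (i j : nat) (t s : R),
  is_derive (fun u => Dx i j u s) t (Dx (S i) j t s) /\
  is_derive (fun v => Dx i j t v) s (Dx i (S j) t s) /\
  continuous (fun p : R * R => Dx i j (fst p) (snd p)) (t, s).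
Hypothesis HDy : forall (i j : nat) (t s : R),
  is_derive (fun u => Dy i j u s) t (Dy (S i) j t s) /\
  is_derive (fun v => Dy i j t v) s (Dy i (S j) t s) /\
  continuous (fun p : R * R => Dy i j (fst p) (snd p)) (t, s).
Hypothesis c_periodic : forall t s, c t (s + 2 * PI) = c t s.

Lemma Dx_dt i j t s : is_derive (fun u => Dx i j u s) t (Dx (S i) j t s).
Proof. apply HDx. Qed.
Lemma Dx_dth i j t s : is_derive (fun v => Dx i j t v) s (Dx i (S j) t s).
Proof. apply HDx. Qed.
Lemma Dy_dt i j t s : is_derive (fun u => Dy i j u s) t (Dy (S i) j t s).
Proof. apply HDy. Qed.
Lemma Dy_dth i j t s : is_derive (fun v => Dy i j t v) s (Dy i (S j) t s).
Proof. apply HDy. Qed.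
Lemma Dx_cont2 i j t s : continuity_2d_pt (Dx i j) t s.
Proof. apply continuity_2d_pt_filterlim, HDx. Qed.
Lemma Dy_cont2 i j t s : continuity_2d_pt (Dy i j) t s.
Proof. apply continuity_2d_pt_filterlim, HDy. Qed.

Ltac cont2d := repeat first
  [ apply continuity_2d_pt_plus | apply continuity_2d_pt_minus | apply continuity_2d_pt_mult
  | apply continuity_2d_pt_opp | apply continuity_2d_pt_pow | apply continuity_2d_pt_const
  | apply Dx_cont2 | apply Dy_cont2
  | apply (continuity_2d_pt_freeze (Dx _ _)) | apply (continuity_2d_pt_freeze (Dy _ _)) ].

Lemma d_th_cx t s : d_th (cx c) t s = Dx 0 1 t s.
Proof. unfold d_th. rewrite <- Dx00. apply is_derive_unique, Dx_dth. Qed.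
Lemma d_th_cy t s : d_th (cy c) t s = Dy 0 1 t s.
Proof. unfold d_th. rewrite <- Dy00. apply is_derive_unique, Dy_dth. Qed.
Lemma d_t_cx t s : d_t (cx c) t s = Dx 1 0 t s.
Proof. unfold d_t. rewrite <- Dx00. apply is_derive_unique, Dx_dt. Qed.
Lemma d_t_cy t s : d_t (cy c) t s = Dy 1 0 t s.
Proof. unfold d_t. rewrite <- Dy00. apply is_derive_unique, Dy_dt. Qed.
Lemma d_th2_cx t s : d_th (d_th (cx c)) t s = Dx 0 2 t s.
Proof.
  unfold d_th at 1. rewrite (Derive_ext _ (fun v => Dx 0 1 t v)) by apply d_th_cx.
  apply is_derive_unique, Dx_dth.
Qed.
Lemma d_th2_cy t s : d_th (d_th (cy c)) t s = Dy 0 2 t s.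
Proof.
  unfold d_th at 1. rewrite (Derive_ext _ (fun v => Dy 0 1 t v)) by apply d_th_cy.
  apply is_derive_unique, Dy_dth.
Qed.

Lemma Dx_periodic t s : Dx 0 0 t (s + 2 * PI) = Dx 0 0 t s.
Proof. rewrite Dx00. unfold cx. rewrite c_periodic. reflexivity. Qed.
Lemma Dy_periodic t s : Dy 0 0 t (s + 2 * PI) = Dy 0 0 t s.
Proof. rewrite Dy00. unfold cy. rewrite c_periodic. reflexivity. Qed.

(* With [Dx i j] the derivative [d^i/dt^i d^j/dth^j] of [x]: [vtan = <c_t, c_th>],
   [vnor = <c_t, i c_th>], [stretch = <c_th, c_tth> = (1/2) d/dt |c_th|^2] and
   [bend = <c_t, c_thth>]. *)
Definition speed2 t s := Dx 0 1 t s ^ 2 + Dy 0 1 t s ^ 2.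
Definition sigma t := sqrt (speed2 t 0).
Definition vtan t s := Dx 1 0 t s * Dx 0 1 t s + Dy 1 0 t s * Dy 0 1 t s.
Definition vnor t s := Dx 1 0 t s * (- Dy 0 1 t s) + Dy 1 0 t s * Dx 0 1 t s.
Definition stretch t s := Dx 0 1 t s * Dx 1 1 t s + Dy 0 1 t s * Dy 1 1 t s.
Definition bend t s := Dx 1 0 t s * Dx 0 2 t s + Dy 1 0 t s * Dy 0 2 t s.
Definition gap t1 s1 t2 s2 :=
  sqrt ((Dx 0 0 t1 s1 - Dx 0 0 t2 s2) ^ 2 + (Dy 0 0 t1 s1 - Dy 0 0 t2 s2) ^ 2).

Lemma speed_eq t s : speed c t s = sqrt (speed2 t s).
Proof. unfold speed, speed2. rewrite d_th_cx, d_th_cy. reflexivity. Qed.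

Lemma dist2_eq_gap t1 s1 t2 s2 : dist2 (c t1 s1) (c t2 s2) = gap t1 s1 t2 s2.
Proof. unfold dist2, gap. rewrite Dx00, Dy00. reflexivity. Qed.

Lemma vtan_periodic t : vtan t (2 * PI) = vtan t 0.
Proof.
  assert (Hx10 : Dx 1 0 t (0 + 2 * PI) = Dx 1 0 t 0)
    by (apply (is_derive_eq_fun (fun u => Dx 0 0 u (0 + 2 * PI)) (fun u => Dx 0 0 u 0) t);
        [intros; apply Dx_periodic | apply Dx_dt | apply Dx_dt]).
  assert (Hy10 : Dy 1 0 t (0 + 2 * PI) = Dy 1 0 t 0)
    by (apply (is_derive_eq_fun (fun u => Dy 0 0 u (0 + 2 * PI)) (fun u => Dy 0 0 u 0) t);
        [intros; apply Dy_periodic | apply Dy_dt | apply Dy_dt]).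
  assert (Hx01 : Dx 0 1 t (0 + 2 * PI) = Dx 0 1 t 0)
    by (apply (is_derive_periodic (fun v => Dx 0 0 t v) (2 * PI) 0);
        [intros; apply Dx_periodic | apply Dx_dth | apply Dx_dth]).
  assert (Hy01 : Dy 0 1 t (0 + 2 * PI) = Dy 0 1 t 0)
    by (apply (is_derive_periodic (fun v => Dy 0 0 t v) (2 * PI) 0);
        [intros; apply Dy_periodic | apply Dy_dth | apply Dy_dth]).
  unfold vtan. replace (2 * PI) with (0 + 2 * PI) by ring.
  rewrite Hx10, Hy10, Hx01, Hy01. reflexivity.
Qed.

Lemma vtan_derive t s : is_derive (fun v => vtan t v) s (stretch t s + bend t s).
Proof.
  unfold vtan.
  replace (stretch t s + bend t s) with
    ((Dx 1 1 t s * Dx 0 1 t s + Dx 1 0 t s * Dx 0 2 t s)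
     + (Dy 1 1 t s * Dy 0 1 t s + Dy 1 0 t s * Dy 0 2 t s)) by (unfold stretch, bend; ring).
  apply is_derive_Rplus; apply is_derive_Rmult; first [apply Dx_dth | apply Dy_dth].
Qed.

Lemma bend_cont2 u v : continuity_2d_pt bend u v.
Proof. unfold bend. cont2d. Qed.
Lemma vtan_cont2 u v : continuity_2d_pt vtan u v.
Proof. unfold vtan. cont2d. Qed.
Lemma vnor_cont2 u v : continuity_2d_pt vnor u v.
Proof. unfold vnor. cont2d. Qed.

Hypothesis c_immersed : forall t, 0 <= t <= 1 -> immersion_at c t.
Hypothesis c_const_speed : forall t s, 0 <= t <= 1 -> speed c t s = len c t / (2 * PI).
Hypothesis c_tang_0 : forall t, 0 <= t <= 1 -> tang_vel c t 0 = 0.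

Lemma speed2_ge0 t s : 0 <= speed2 t s.
Proof. unfold speed2. apply Rplus_le_le_0_compat; apply pow2_ge_0. Qed.

Lemma speed2_const t s : 0 <= t <= 1 -> speed2 t s = speed2 t 0.
Proof.
  intros Ht. apply sqrt_inj; try apply speed2_ge0.
  rewrite <- !speed_eq, !c_const_speed; auto.
Qed.

Lemma speed2_pos t : 0 <= t <= 1 -> 0 < speed2 t 0.
Proof.
  intros Ht. pose proof (c_immersed t Ht 0) as H. rewrite d_th_cx, d_th_cy in H.
  destruct (speed2_ge0 t 0) as [|E]; auto. exfalso. apply H. unfold speed2 in E.
  pose proof (pow2_ge_0 (Dx 0 1 t 0)). pose proof (pow2_ge_0 (Dy 0 1 t 0)).
  f_equal; apply Rsqr_0_uniq; rewrite Rsqr_pow2; lra.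
Qed.

Lemma vtan_at_0 t : 0 <= t <= 1 -> vtan t 0 = 0.
Proof.
  intros Ht. unfold vtan. rewrite <- d_t_cx, <- d_t_cy, <- d_th_cx, <- d_th_cy.
  apply c_tang_0, Ht.
Qed.

Lemma sigma_pos t : 0 <= t <= 1 -> 0 < sigma t.
Proof. intros; apply sqrt_lt_R0, speed2_pos; auto. Qed.

Lemma speed2_eq_sigma t s : 0 <= t <= 1 -> speed2 t s = sigma t ^ 2.
Proof.
  intros Ht. rewrite speed2_const by auto. unfold sigma. rewrite pow2_sqrt; auto.
  apply speed2_ge0.
Qed.

Lemma speed_eq_sigma t s : 0 <= t <= 1 -> speed c t s = sigma t.
Proof.
  intros Ht. rewrite speed_eq, speed2_eq_sigma by auto.
  apply sqrt_pow2. left; apply sigma_pos, Ht.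
Qed.

Lemma len_eq_sigma t : 0 <= t <= 1 -> len c t = 2 * PI * sigma t.
Proof.
  intros Ht. pose proof PI_RGT_0.
  assert (E := c_const_speed t 0 Ht). rewrite speed_eq_sigma in E by auto.
  (* [len c t] lives in Coquelicot's normed-module carrier, where [field] does not apply. *)
  assert (Hl : forall l : R, sigma t = l / (2 * PI) -> l = 2 * PI * sigma t)
    by (intros l ->; field; lra).
  apply Hl, E.
Qed.

Lemma c_th_orth_c_thth t s : 0 <= t <= 1 ->
  Dx 0 1 t s * Dx 0 2 t s + Dy 0 1 t s * Dy 0 2 t s = 0.
Proof.
  intros Ht.
  assert (H := is_derive_Rplus _ _ s _ _ (is_derive_Rsqr _ s _ (Dx_dth 0 1 t s))
                                         (is_derive_Rsqr _ s _ (Dy_dth 0 1 t s))).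
  assert (H0 : is_derive (fun v => speed2 t v) s 0).
  { apply (is_derive_ext (fun _ => speed2 t 0)); [intros; symmetry; apply speed2_const, Ht|].
    apply is_derive_Rconst. }
  pose proof (is_derive_eq_fun _ _ s _ _ (fun _ => eq_refl) H H0). lra.
Qed.

Lemma stretch_const t s : 0 < t < 1 -> stretch t s = stretch t 0.
Proof.
  intros Ht.
  assert (Hs := is_derive_Rplus _ _ t _ _ (is_derive_Rsqr _ t _ (Dx_dt 0 1 t s))
                                          (is_derive_Rsqr _ t _ (Dy_dt 0 1 t s))).
  assert (H0 := is_derive_Rplus _ _ t _ _ (is_derive_Rsqr _ t _ (Dx_dt 0 1 t 0))
                                          (is_derive_Rsqr _ t _ (Dy_dt 0 1 t 0))).
  apply (is_derive_ext_loc _ (fun u => speed2 u s)) in H0.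
  - pose proof (is_derive_eq_fun _ _ t _ _ (fun _ => eq_refl) Hs H0). unfold stretch. lra.
  - apply (locally_interval _ t 0 1); simpl; try lra.
    intros u Hu1 Hu2. symmetry; apply speed2_const; lra.
Qed.

Lemma vtan_derive_const t s : 0 < t < 1 ->
  is_derive (fun v => vtan t v) s (stretch t 0 + bend t s).
Proof. intros Ht. rewrite <- (stretch_const t s Ht). apply vtan_derive. Qed.

Lemma stretch_eq_mean t : 0 < t < 1 -> stretch t 0 = - RInt (bend t) 0 (2 * PI) / (2 * PI).
Proof.
  intros Ht. pose proof PI_RGT_0.
  apply (zero_ends_slope (vtan t)); try lra.
  - intros; apply vtan_derive_const, Ht.
  - intros; apply continuous_slice, bend_cont2.
  - apply vtan_at_0; lra.
  - rewrite vtan_periodic. apply vtan_at_0; lra.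
Qed.

Lemma vtan_abs_le t s : 0 < t < 1 -> 0 <= s <= 2 * PI ->
  Rabs (vtan t s) <= 2 * RInt (fun v => Rabs (bend t v)) 0 (2 * PI).
Proof.
  intros Ht Hs. pose proof PI_RGT_0.
  apply (zero_ends_abs_le (vtan t) (bend t) (stretch t 0)); auto; try lra.
  - intros; apply vtan_derive_const, Ht.
  - intros; apply continuous_slice, bend_cont2.
  - apply vtan_at_0; lra.
  - rewrite vtan_periodic. apply vtan_at_0; lra.
Qed.

Variables A L : R.
Hypothesis HA : 0 < A.
Hypothesis HL : 0 < L.
Hypothesis c_energy : forall t, 0 <= t <= 1 ->
  RInt (fun s => (1 + A * curv c t s ^ 2) * norm_vel c t s ^ 2 / speed c t s) 0 (2 * PI) = L ^ 2.

(* At constant speed [c_thth] is normal to [c_th], so [bend = kappa sigma vnor]. *)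
Lemma energy_integrand_eq t s : 0 <= t <= 1 ->
  (1 + A * curv c t s ^ 2) * norm_vel c t s ^ 2 / speed c t s =
  / sigma t * vnor t s ^ 2 + A / sigma t ^ 3 * bend t s ^ 2.
Proof.
  intros Ht. pose proof (sigma_pos t Ht) as Hs. pose proof (c_th_orth_c_thth t s Ht) as Ho.
  pose proof (speed2_eq_sigma t s Ht) as HS. unfold speed2 in HS.
  unfold curv, norm_vel. rewrite !speed_eq_sigma by auto.
  rewrite d_th_cx, d_th_cy, d_t_cx, d_t_cy, d_th2_cx, d_th2_cy. fold (vnor t s).
  set (k := Dx 0 1 t s * Dy 0 2 t s - Dy 0 1 t s * Dx 0 2 t s).
  assert (Hk : k * vnor t s = sigma t ^ 2 * bend t s).
  { unfold k, vnor, bend. rewrite <- HS.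
    transitivity ((Dx 0 1 t s ^ 2 + Dy 0 1 t s ^ 2)
                  * (Dx 1 0 t s * Dx 0 2 t s + Dy 1 0 t s * Dy 0 2 t s)
                  - (Dx 0 1 t s * Dx 1 0 t s + Dy 0 1 t s * Dy 1 0 t s)
                    * (Dx 0 1 t s * Dx 0 2 t s + Dy 0 1 t s * Dy 0 2 t s));
      [ring | rewrite Ho; ring]. }
  replace ((1 + A * (k / sigma t ^ 3) ^ 2) * vnor t s ^ 2 / sigma t)
    with (/ sigma t * vnor t s ^ 2 + A / sigma t ^ 3 * ((k * vnor t s) ^ 2 / sigma t ^ 4))
    by (field; lra).
  rewrite Hk. field. lra.
Qed.

Lemma ex_RInt_vnor_sqr t a b : ex_RInt (fun s => vnor t s ^ 2) a b.
Proof. apply (ex_RInt_slice (fun u v => vnor u v ^ 2)). intros; cont2d; apply vnor_cont2. Qed.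
Lemma ex_RInt_vtan_sqr t a b : ex_RInt (fun s => vtan t s ^ 2) a b.
Proof. apply (ex_RInt_slice (fun u v => vtan u v ^ 2)). intros; cont2d; apply vtan_cont2. Qed.
Lemma ex_RInt_bend t a b : ex_RInt (bend t) a b.
Proof. apply (ex_RInt_slice bend). apply bend_cont2. Qed.
Lemma ex_RInt_bend_sqr t a b : ex_RInt (fun s => bend t s ^ 2) a b.
Proof. apply (ex_RInt_slice (fun u v => bend u v ^ 2)). intros; cont2d; apply bend_cont2. Qed.
Lemma ex_RInt_bend_abs t a b : ex_RInt (fun s => Rabs (bend t s)) a b.
Proof.
  apply ex_RInt_of_continuous. intros; apply continuous_Rabs_comp, continuous_slice, bend_cont2.
Qed.

Lemma energy_L2_bounds t : 0 <= t <= 1 ->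
  RInt (fun s => vnor t s ^ 2) 0 (2 * PI) <= sigma t * L ^ 2 /\
  RInt (fun s => bend t s ^ 2) 0 (2 * PI) <= sigma t ^ 3 * L ^ 2 / A.
Proof.
  intros Ht. pose proof (sigma_pos t Ht) as Hs. pose proof PI_RGT_0.
  assert (E : / sigma t * RInt (fun s => vnor t s ^ 2) 0 (2 * PI)
              + A / sigma t ^ 3 * RInt (fun s => bend t s ^ 2) 0 (2 * PI) = L ^ 2).
  { rewrite <- (c_energy t Ht), <- RInt_Rscal, <- RInt_Rscal, <- RInt_Rplus;
      auto using ex_RInt_Rscal, ex_RInt_vnor_sqr, ex_RInt_bend_sqr.
    apply RInt_ext. intros x _. symmetry. apply energy_integrand_eq, Ht. }
  assert (0 <= RInt (fun s => vnor t s ^ 2) 0 (2 * PI))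
    by (apply RInt_Rge0; [lra | apply ex_RInt_vnor_sqr | intros; apply pow2_ge_0]).
  assert (0 <= RInt (fun s => bend t s ^ 2) 0 (2 * PI))
    by (apply RInt_Rge0; [lra | apply ex_RInt_bend_sqr | intros; apply pow2_ge_0]).
  assert (0 < sigma t ^ 3) by (apply pow_lt; lra).
  assert (0 <= / sigma t * RInt (fun s => vnor t s ^ 2) 0 (2 * PI))
    by (apply Rmult_le_pos; [left; apply Rinv_0_lt_compat|]; lra).
  assert (0 <= A / sigma t ^ 3 * RInt (fun s => bend t s ^ 2) 0 (2 * PI))
    by (apply Rmult_le_pos; [left; apply Rdiv_lt_0_compat|]; lra).
  split.
  - apply Rmult_le_reg_l with (/ sigma t); [apply Rinv_0_lt_compat; lra|].
    replace (/ sigma t * (sigma t * L ^ 2)) with (L ^ 2) by (field; lra). lra.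
  - apply Rmult_le_reg_l with (A / sigma t ^ 3); [apply Rdiv_lt_0_compat; lra|].
    replace (A / sigma t ^ 3 * (sigma t ^ 3 * L ^ 2 / A)) with (L ^ 2) by (field; lra). lra.
Qed.

Lemma RInt_bend_abs_le t : 0 <= t <= 1 ->
  RInt (fun v => Rabs (bend t v)) 0 (2 * PI) <= sqrt (2 * PI * (sigma t ^ 3 * L ^ 2 / A)).
Proof.
  intros Ht. pose proof PI_RGT_0. pose proof (sigma_pos t Ht).
  replace (2 * PI * _) with ((2 * PI - 0) * (sigma t ^ 3 * L ^ 2 / A)) by ring.
  apply RInt_abs_le_sqrt; auto using ex_RInt_bend, ex_RInt_bend_sqr, ex_RInt_bend_abs; try lra.
  - apply Rdiv_lt_0_compat; [apply Rmult_lt_0_compat; apply pow_lt|]; lra.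
  - apply energy_L2_bounds, Ht.
Qed.

Lemma vtan_sqr_le t s : 0 < t < 1 -> 0 <= s <= 2 * PI ->
  vtan t s ^ 2 <= 8 * PI * (sigma t ^ 3 * L ^ 2 / A).
Proof.
  intros Ht Hs. pose proof PI_RGT_0. pose proof (sigma_pos t ltac:(lra)).
  assert (0 <= sigma t ^ 3 * L ^ 2 / A)
    by (apply Rmult_le_pos; [apply Rmult_le_pos; apply pow_le|left; apply Rinv_0_lt_compat]; lra).
  pose proof (RInt_bend_abs_le t ltac:(lra)).
  replace (8 * PI * _) with ((2 * sqrt (2 * PI * (sigma t ^ 3 * L ^ 2 / A))) ^ 2)
    by (rewrite Rpow_mult_distr, pow2_sqrt; nra).
  apply sqr_le_of_Rabs. eapply Rle_trans; [apply vtan_abs_le; auto | lra].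
Qed.

Lemma stretch_sqr_le t : 0 < t < 1 -> stretch t 0 ^ 2 <= sigma t ^ 3 * L ^ 2 / A / (2 * PI).
Proof.
  intros Ht. pose proof PI_RGT_0. pose proof (sigma_pos t ltac:(lra)).
  assert (0 <= sigma t ^ 3 * L ^ 2 / A)
    by (apply Rmult_le_pos; [apply Rmult_le_pos; apply pow_le|left; apply Rinv_0_lt_compat]; lra).
  assert (Hb : Rabs (RInt (bend t) 0 (2 * PI)) <= sqrt (2 * PI * (sigma t ^ 3 * L ^ 2 / A))).
  { eapply Rle_trans; [apply abs_RInt_le; [lra | apply ex_RInt_bend]|].
    apply RInt_bend_abs_le; lra. }
  apply sqr_le_of_Rabs in Hb. rewrite pow2_sqrt in Hb by nra.
  rewrite stretch_eq_mean by auto.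
  apply Rmult_le_reg_l with ((2 * PI) ^ 2); [nra|].
  replace ((2 * PI) ^ 2 * (- RInt (bend t) 0 (2 * PI) / (2 * PI)) ^ 2)
    with (RInt (bend t) 0 (2 * PI) ^ 2) by (field; lra).
  replace ((2 * PI) ^ 2 * (sigma t ^ 3 * L ^ 2 / A / (2 * PI)))
    with (2 * PI * (sigma t ^ 3 * L ^ 2 / A)) by (field; lra).
  exact Hb.
Qed.

Definition sigma_rate := L / (2 * sqrt (2 * PI * A)).

Lemma sqrt_sigma_derive t : 0 <= t <= 1 ->
  is_derive (fun u => sqrt (sigma u)) t (stretch t 0 / sigma t / (2 * sqrt (sigma t))).
Proof.
  intros Ht. apply is_derive_sqrt; [|apply sigma_pos, Ht]. unfold sigma.
  replace (stretch t 0 / sqrt (speed2 t 0)) with (2 * stretch t 0 / (2 * sqrt (speed2 t 0)))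
    by (field; apply Rgt_not_eq, sigma_pos, Ht).
  apply (is_derive_sqrt (fun u => speed2 u 0)); [|apply speed2_pos, Ht].
  replace (2 * stretch t 0) with (2 * Dx 0 1 t 0 * Dx 1 1 t 0 + 2 * Dy 0 1 t 0 * Dy 1 1 t 0)
    by (unfold stretch; ring).
  unfold speed2. apply is_derive_Rplus.
  - apply (is_derive_Rsqr (fun u => Dx 0 1 u 0)), Dx_dt.
  - apply (is_derive_Rsqr (fun u => Dy 0 1 u 0)), Dy_dt.
Qed.

Lemma sqrt_sigma_derive_le t : 0 < t < 1 ->
  Rabs (stretch t 0 / sigma t / (2 * sqrt (sigma t))) <= sigma_rate.
Proof.
  intros Ht. pose proof PI_RGT_0. pose proof (sigma_pos t ltac:(lra)) as Hs.
  assert (Hq : 0 < sqrt (sigma t)) by (apply sqrt_lt_R0, Hs).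
  assert (Hq2 : sqrt (sigma t) ^ 2 = sigma t) by (apply pow2_sqrt; lra).
  assert (Hr : 0 < sqrt (2 * PI * A)) by (apply sqrt_lt_R0; nra).
  assert (Hr2 : sqrt (2 * PI * A) ^ 2 = 2 * PI * A) by (apply pow2_sqrt; nra).
  apply Rabs_le_of_sqr; [unfold sigma_rate; apply Rlt_le, Rdiv_lt_0_compat; lra|].
  replace ((stretch t 0 / sigma t / (2 * sqrt (sigma t))) ^ 2)
    with (stretch t 0 ^ 2 / (4 * sigma t ^ 3))
    by (set (q := sqrt (sigma t)) in *; rewrite <- Hq2; field; lra).
  replace (sigma_rate ^ 2) with (L ^ 2 / (4 * sqrt (2 * PI * A) ^ 2))
    by (unfold sigma_rate; field; lra).
  rewrite Hr2. assert (Hs3 : 0 < sigma t ^ 3) by (apply pow_lt, Hs).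
  apply Rmult_le_reg_l with (4 * sigma t ^ 3); [lra|].
  replace (4 * sigma t ^ 3 * (stretch t 0 ^ 2 / (4 * sigma t ^ 3))) with (stretch t 0 ^ 2)
    by (field; lra).
  replace (4 * sigma t ^ 3 * (L ^ 2 / (4 * (2 * PI * A))))
    with (sigma t ^ 3 * L ^ 2 / A / (2 * PI)) by (field; lra).
  apply stretch_sqr_le, Ht.
Qed.

Lemma sqrt_sigma_lipschitz ta t : 0 <= ta <= t -> t <= 1 ->
  Rabs (sqrt (sigma t) - sqrt (sigma ta)) <= sigma_rate * (t - ta).
Proof.
  intros Hta Ht.
  apply (MVT_abs_le (fun u => sqrt (sigma u))
                    (fun u => stretch u 0 / sigma u / (2 * sqrt (sigma u)))); try lra.
  - intros x Hx. apply sqrt_sigma_derive. lra.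
  - intros x Hx. apply sqrt_sigma_derive_le. lra.
Qed.

Lemma gap_sym t1 s1 t2 s2 : gap t1 s1 t2 s2 = gap t2 s2 t1 s1.
Proof. unfold gap. f_equal. ring. Qed.

Lemma gap_triangle t1 s1 t2 s2 t3 s3 : gap t1 s1 t3 s3 <= gap t1 s1 t2 s2 + gap t2 s2 t3 s3.
Proof.
  unfold gap.
  replace (Dx 0 0 t1 s1 - Dx 0 0 t3 s3)
    with ((Dx 0 0 t1 s1 - Dx 0 0 t2 s2) + (Dx 0 0 t2 s2 - Dx 0 0 t3 s3)) by ring.
  replace (Dy 0 0 t1 s1 - Dy 0 0 t3 s3)
    with ((Dy 0 0 t1 s1 - Dy 0 0 t2 s2) + (Dy 0 0 t2 s2 - Dy 0 0 t3 s3)) by ring.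
  apply sqrt_sum_sqr_triangle.
Qed.

Lemma gap_th_le t a b : 0 <= t <= 1 -> gap t a t b <= sigma t * Rabs (a - b).
Proof.
  intros Ht. pose proof (sigma_pos t Ht).
  assert (Hle : forall a b, a <= b -> gap t b t a <= sigma t * (b - a)).
  { intros a' b' Hab. apply (planar_MVT (Dx 0 0 t) (Dy 0 0 t) (Dx 0 1 t) (Dy 0 1 t)); try lra.
    - intros; apply Dx_dth.
    - intros; apply Dy_dth.
    - intros s _. fold (speed2 t s). rewrite speed2_eq_sigma by auto. lra. }
  destruct (Rle_dec a b).
  - rewrite gap_sym, Rabs_minus_sym, Rabs_right by lra. apply Hle; lra.
  - rewrite Rabs_right by lra. apply Hle; lra.
Qed.

Lemma kinetic_decomp T s : 0 <= T <= 1 ->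
  Dx 1 0 T s ^ 2 + Dy 1 0 T s ^ 2 = / sigma T ^ 2 * vtan T s ^ 2 + / sigma T ^ 2 * vnor T s ^ 2.
Proof.
  intros HT. pose proof (sigma_pos T HT). pose proof (speed2_eq_sigma T s HT) as HS.
  unfold speed2 in HS. rewrite <- HS. unfold vtan, vnor. field. rewrite HS. nra.
Qed.

Section Window.
Variables ta al be : R.

Definition wgap T s := (Dx 0 0 T s - Dx 0 0 ta s) ^ 2 + (Dy 0 0 T s - Dy 0 0 ta s) ^ 2.
Definition wgap_dt T s :=
  2 * (Dx 0 0 T s - Dx 0 0 ta s) * Dx 1 0 T s + 2 * (Dy 0 0 T s - Dy 0 0 ta s) * Dy 1 0 T s.
Definition window_gap T := RInt (wgap T) al be.
Definition window_kinetic T := RInt (fun s => Dx 1 0 T s ^ 2 + Dy 1 0 T s ^ 2) al be.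

Lemma wgap_derive T s : is_derive (fun u => wgap u s) T (wgap_dt T s).
Proof.
  unfold wgap, wgap_dt. apply is_derive_Rplus.
  - apply (is_derive_Rsqr (fun u => Dx 0 0 u s - Dx 0 0 ta s)).
    rewrite <- (Rminus_0_r (Dx 1 0 T s)).
    apply is_derive_Rminus; [apply Dx_dt | apply is_derive_Rconst].
  - apply (is_derive_Rsqr (fun u => Dy 0 0 u s - Dy 0 0 ta s)).
    rewrite <- (Rminus_0_r (Dy 1 0 T s)).
    apply is_derive_Rminus; [apply Dy_dt | apply is_derive_Rconst].
Qed.

Lemma wgap_cont2 u v : continuity_2d_pt wgap u v.
Proof. unfold wgap. cont2d. Qed.
Lemma wgap_dt_cont2 u v : continuity_2d_pt wgap_dt u v.
Proof. unfold wgap_dt. cont2d. Qed.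
Lemma ex_RInt_kinetic T : ex_RInt (fun s => Dx 1 0 T s ^ 2 + Dy 1 0 T s ^ 2) al be.
Proof. apply (ex_RInt_slice (fun u v => Dx 1 0 u v ^ 2 + Dy 1 0 u v ^ 2)). intros; cont2d. Qed.

Lemma window_gap_derive T : is_derive window_gap T (RInt (wgap_dt T) al be).
Proof.
  unfold window_gap.
  assert (H := is_derive_RInt_param wgap al be T).
  rewrite (RInt_ext _ (wgap_dt T)) in H.
  - apply H.
    + apply filter_forall. intros x t _. exists (wgap_dt x t). apply wgap_derive.
    + intros t _. apply (continuity_2d_pt_ext wgap_dt); [|apply wgap_dt_cont2].
      intros; symmetry; apply is_derive_unique, wgap_derive.
    + apply filter_forall. intros y. apply (ex_RInt_slice wgap), wgap_cont2.
  - intros x _. apply is_derive_unique, wgap_derive.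
Qed.

Lemma window_gap_start : window_gap ta = 0.
Proof.
  unfold window_gap. rewrite (RInt_ext _ (fun _ => 0)), RInt_Rconst; [apply Rmult_0_r|].
  intros x _. unfold wgap. rewrite !Rminus_eq_0. change (@eq R (0 ^ 2 + 0 ^ 2) 0). ring.
Qed.

Lemma window_gap_derive_le T lam : al <= be -> 0 < lam ->
  RInt (wgap_dt T) al be <= lam * window_gap T + / lam * window_kinetic T.
Proof.
  intros Hab Hl. unfold window_gap, window_kinetic.
  assert (Eg : ex_RInt (wgap T) al be) by (apply (ex_RInt_slice wgap), wgap_cont2).
  assert (Ek := ex_RInt_kinetic T).
  rewrite <- (RInt_Rscal _ _ _ lam Eg), <- (RInt_Rscal _ _ _ (/ lam) Ek).
  rewrite <- RInt_Rplus by (apply ex_RInt_Rscal; assumption).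
  apply RInt_Rle; [exact Hab | apply (ex_RInt_slice wgap_dt), wgap_dt_cont2 | |].
  - apply ex_RInt_Rplus; apply ex_RInt_Rscal; assumption.
  - intros x _. unfold wgap, wgap_dt.
    set (a1 := Dx 0 0 T x - Dx 0 0 ta x). set (a2 := Dy 0 0 T x - Dy 0 0 ta x).
    set (b1 := Dx 1 0 T x). set (b2 := Dy 1 0 T x).
    assert (0 <= (lam * a1 - b1) ^ 2 + (lam * a2 - b2) ^ 2)
      by (apply Rplus_le_le_0_compat; apply pow2_ge_0).
    apply Rmult_le_reg_l with lam; [exact Hl|].
    replace (lam * (lam * (a1 ^ 2 + a2 ^ 2) + / lam * (b1 ^ 2 + b2 ^ 2)))
      with (lam * (2 * a1 * b1 + 2 * a2 * b2) + ((lam * a1 - b1) ^ 2 + (lam * a2 - b2) ^ 2))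
      by (field; lra).
    lra.
Qed.

Lemma window_kinetic_le T : 0 <= al <= be -> be <= 2 * PI -> 0 < T < 1 ->
  window_kinetic T <=
    (be - al) * (8 * PI * (sigma T ^ 3 * L ^ 2 / A)) / sigma T ^ 2 + L ^ 2 / sigma T.
Proof.
  intros Hal Hbe HT. pose proof (sigma_pos T ltac:(lra)) as Hs. pose proof PI_RGT_0.
  assert (Hs2 : 0 < sigma T ^ 2) by (apply pow_lt, Hs).
  unfold window_kinetic.
  rewrite (RInt_ext _ (fun s => / sigma T ^ 2 * vtan T s ^ 2 + / sigma T ^ 2 * vnor T s ^ 2))
    by (intros; apply kinetic_decomp; lra).
  rewrite RInt_Rplus, !RInt_Rscal by auto using ex_RInt_Rscal, ex_RInt_vtan_sqr, ex_RInt_vnor_sqr.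
  assert (RInt (fun s => vtan T s ^ 2) al be <= (be - al) * (8 * PI * (sigma T ^ 3 * L ^ 2 / A))).
  { rewrite <- RInt_Rconst. apply RInt_Rle; [lra | apply ex_RInt_vtan_sqr | apply ex_RInt_const|].
    intros x Hx. apply vtan_sqr_le; lra. }
  assert (RInt (fun s => vnor T s ^ 2) al be <= sigma T * L ^ 2).
  { eapply Rle_trans; [|apply (energy_L2_bounds T ltac:(lra))].
    apply RInt_Rle_sub; try lra; [apply ex_RInt_vnor_sqr | intros; apply pow2_ge_0]. }
  apply Rle_trans with (/ sigma T ^ 2 * ((be - al) * (8 * PI * (sigma T ^ 3 * L ^ 2 / A)))
                        + / sigma T ^ 2 * (sigma T * L ^ 2)).
  - apply Rplus_le_compat; apply Rmult_le_compat_l; auto; left; apply Rinv_0_lt_compat, Hs2.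
  - right. field. lra.
Qed.

End Window.

Lemma window_gap_le ta tb al be K2 : ta <= tb -> al <= be -> 0 < K2 ->
  (forall T, ta < T < tb -> window_kinetic al be T <= K2) ->
  window_gap ta al be tb <= K2 * (tb - ta) ^ 2.
Proof.
  intros Htab Hab HK2 HK.
  replace (K2 * (tb - ta) ^ 2) with ((sqrt K2 * (tb - ta)) ^ 2)
    by (rewrite Rpow_mult_distr, pow2_sqrt; lra).
  apply (sqrt_growth_le (window_gap ta al be) (fun T => RInt (wgap_dt ta T) al be));
    [lra | apply sqrt_lt_R0, HK2 | intros; apply window_gap_derive | | apply window_gap_start |].
  - intros T _. apply RInt_Rge0; [lra | apply (ex_RInt_slice (wgap ta)), wgap_cont2 |].
    intros; unfold wgap; apply Rplus_le_le_0_compat; apply pow2_ge_0.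
  - intros T lam HT Hl. eapply Rle_trans; [apply (window_gap_derive_le ta al be T lam); lra|].
    rewrite pow2_sqrt by lra. apply Rplus_le_compat_l.
    unfold Rdiv. rewrite (Rmult_comm K2). apply Rmult_le_compat_l.
    + left; apply Rinv_0_lt_compat, Hl.
    + apply HK, HT.
Qed.

Lemma gap_time_window ta tb th al be K2 : 0 <= ta -> ta < tb -> tb <= 1 ->
  0 <= al -> al < be -> be <= 2 * PI -> al <= th <= be -> 0 < K2 ->
  (forall T, ta < T < tb -> window_kinetic al be T <= K2) ->
  gap ta th tb th <= (sigma ta + sigma tb) * (be - al) + sqrt (K2 * (tb - ta) ^ 2 / (be - al)).
Proof.
  intros Hta Htab Htb Hal Hab Hbe Hth HK2 HK.
  set (S := sigma ta + sigma tb). set (D := gap ta th tb th).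
  assert (Ewg : ex_RInt (wgap ta tb) al be) by (apply (ex_RInt_slice (wgap ta)), wgap_cont2).
  assert (HG := window_gap_le ta tb al be K2 ltac:(lra) ltac:(lra) HK2 HK).
  assert (Hpt : forall s, al <= s <= be -> D - S * (be - al) <= gap ta s tb s).
  { intros s Hs. pose proof (sigma_pos ta ltac:(lra)). pose proof (sigma_pos tb ltac:(lra)).
    pose proof (gap_triangle ta th ta s tb th). pose proof (gap_triangle ta s tb s tb th).
    pose proof (gap_th_le ta th s ltac:(lra)). pose proof (gap_th_le tb s th ltac:(lra)).
    assert (Rabs (th - s) <= be - al) by (apply Rabs_le; lra).
    assert (Rabs (s - th) <= be - al) by (apply Rabs_le; lra).
    unfold D, S. nra. }
  destruct (Rle_dec D (S * (be - al))) as [Hnear|Hfar].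
  { pose proof (sqrt_pos (K2 * (tb - ta) ^ 2 / (be - al))). lra. }
  enough (D - S * (be - al) <= sqrt (K2 * (tb - ta) ^ 2 / (be - al))) by lra.
  rewrite <- (sqrt_pow2 (D - S * (be - al))) by lra. apply sqrt_le_1_alt.
  apply Rmult_le_reg_l with (be - al); [lra|].
  replace ((be - al) * (K2 * (tb - ta) ^ 2 / (be - al))) with (K2 * (tb - ta) ^ 2) by (field; lra).
  eapply Rle_trans; [|exact HG]. unfold window_gap. rewrite <- RInt_Rconst.
  apply RInt_Rle; [lra | apply ex_RInt_const | exact Ewg |].
  intros s Hs. replace (wgap ta tb s) with (gap ta s tb s ^ 2).
  - apply pow_incr. split; [lra | apply Hpt, Hs].
  - unfold gap, wgap. rewrite pow2_sqrt by (apply Rplus_le_le_0_compat; apply pow2_ge_0). ring.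
Qed.

Lemma sigma_rate_small ta tb lmin : 0 <= ta <= 1 -> ta <= tb -> lmin <= 2 * PI * sigma ta ->
  (L * (tb - ta)) ^ 2 <= A * lmin / 16 -> sigma_rate * (tb - ta) <= sqrt (sigma ta) / 8.
Proof.
  intros Hta Htab Hlmin HX. pose proof PI_RGT_0. pose proof (sigma_pos ta Hta).
  assert (Hr : 0 < sqrt (2 * PI * A)) by (apply sqrt_lt_R0; nra).
  assert (Hr2 : sqrt (2 * PI * A) ^ 2 = 2 * PI * A) by (apply pow2_sqrt; nra).
  eapply Rle_trans; [apply Rle_abs|].
  apply Rabs_le_of_sqr; [apply Rmult_le_pos; [apply sqrt_pos | lra]|].
  replace ((sigma_rate * (tb - ta)) ^ 2) with ((L * (tb - ta)) ^ 2 / (4 * sqrt (2 * PI * A) ^ 2))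
    by (unfold sigma_rate; field; lra).
  replace ((sqrt (sigma ta) / 8) ^ 2) with (sqrt (sigma ta) ^ 2 / 64) by field.
  rewrite (pow2_sqrt (sigma ta)) by lra.
  rewrite Hr2. apply Rmult_le_reg_r with (8 * PI * A); [nra|].
  replace ((L * (tb - ta)) ^ 2 / (4 * (2 * PI * A)) * (8 * PI * A)) with ((L * (tb - ta)) ^ 2)
    by (field; nra).
  nra.
Qed.

Lemma sigma_comparable ta tb T : 0 <= ta <= T -> T <= tb -> tb <= 1 ->
  sigma_rate * (tb - ta) <= sqrt (sigma ta) / 8 ->
  49 / 64 * sigma ta <= sigma T <= 81 / 64 * sigma ta.
Proof.
  intros HT HTb Htb Hrate. pose proof PI_RGT_0.
  assert (Hr : 0 <= sigma_rate)
    by (unfold sigma_rate; apply Rlt_le, Rdiv_lt_0_compat;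
        [|apply Rmult_lt_0_compat, sqrt_lt_R0]; nra).
  pose proof (sqrt_sigma_lipschitz ta T HT ltac:(lra)) as Hl. apply Rabs_le_between in Hl.
  assert (sigma_rate * (T - ta) <= sigma_rate * (tb - ta)) by (apply Rmult_le_compat_l; lra).
  pose proof (sigma_pos ta ltac:(lra)). pose proof (sigma_pos T ltac:(lra)).
  pose proof (sqrt_pos (sigma T)). pose proof (sqrt_pos (sigma ta)).
  rewrite <- (pow2_sqrt (sigma T)), <- (pow2_sqrt (sigma ta)) by lra.
  split; nra.
Qed.

Lemma window_kinetic_uniform lam al de lmax T : 0 <= al -> 0 < de -> al + de <= 2 * PI ->
  0 < T < 1 -> 0 < lam -> 49 / 64 * lam <= sigma T -> 2 * PI * sigma T <= lmax ->
  window_kinetic al (al + de) T <= de * (4 * lmax / A) * L ^ 2 + 64 / 49 * L ^ 2 / lam.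
Proof.
  intros Hal Hde Hbe HT Hlam Hlow Hhigh. pose proof PI_RGT_0.
  pose proof (sigma_pos T ltac:(lra)) as Hs. assert (HL2 : 0 < L ^ 2) by (apply pow_lt, HL).
  eapply Rle_trans; [apply window_kinetic_le; lra|].
  replace (al + de - al) with de by ring.
  replace (de * (8 * PI * (sigma T ^ 3 * L ^ 2 / A)) / sigma T ^ 2)
    with (de * (4 * (2 * PI * sigma T) / A) * L ^ 2) by (field; lra).
  apply Rplus_le_compat.
  - apply Rmult_le_compat_r; [lra|]. apply Rmult_le_compat_l; [lra|].
    unfold Rdiv. apply Rmult_le_compat_r; [left; apply Rinv_0_lt_compat, HA | lra].
  - apply Rmult_le_reg_r with (sigma T * lam); [nra|].
    replace (L ^ 2 / sigma T * (sigma T * lam)) with (L ^ 2 * lam) by (field; lra).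
    replace (64 / 49 * L ^ 2 / lam * (sigma T * lam)) with (64 / 49 * L ^ 2 * sigma T)
      by (field; lra).
    nra.
Qed.

Lemma gap_time_le ta tb th lmax lmin : 0 <= ta -> ta < tb -> tb <= 1 -> 0 <= th <= 2 * PI ->
  0 < lmin -> (forall t, 0 <= t <= 1 -> lmin <= 2 * PI * sigma t <= lmax) ->
  (L * (tb - ta)) ^ 2 <= A * lmin / 16 -> (L * (tb - ta)) ^ 2 <= lmin ^ 3 / 64 ->
  gap ta th tb th <=
    4 * sqrt (sqrt lmax) * sqrt (L * (tb - ta)) + 2 * (L * (tb - ta)) * sqrt (lmax / A).
Proof.
  intros Hta Htab Htb Hth Hlmin Hlen HX1 HX2. pose proof PI_RGT_0. pose proof PI2_3_2.
  set (X := L * (tb - ta)) in *. assert (HX : 0 < X) by (unfold X; nra).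
  set (lam := sigma ta). assert (Hlam : 0 < lam) by (apply sigma_pos; lra).
  destruct (Hlen ta ltac:(lra)) as [Hlo Hhi]. fold lam in Hlo, Hhi.
  set (de := sqrt X / sqrt (sqrt lam) ^ 3).
  assert (Hde : 0 < de)
    by (apply Rdiv_lt_0_compat; [apply sqrt_lt_R0 | apply pow_lt, sqrt_lt_R0, sqrt_lt_R0]; lra).
  assert (Hde94 : de <= 9 / 4) by (apply (window_width_le lam X lmin); lra).
  assert (Hcmp : forall T, ta <= T <= tb -> 49 / 64 * lam <= sigma T <= 81 / 64 * lam)
    by (intros T HT; apply sigma_comparable with tb; try lra;
        apply sigma_rate_small with lmin; [lra | lra | exact Hlo | exact HX1]).
  destruct (window_exists de (2 * PI) th) as [al [Hal [Hbe Hthw]]]; [lra | lra |].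
  pose proof (gap_time_window ta tb th al (al + de)
                (de * (4 * lmax / A) * L ^ 2 + 64 / 49 * L ^ 2 / lam)) as HW.
  replace (al + de - al) with de in HW by ring.
  apply (gap_time_algebra lam X lmax A (sigma ta + sigma tb)); [nra | lra | lra | exact Hde94 | |].
  - destruct (Hcmp tb ltac:(lra)). pose proof (sigma_pos tb ltac:(lra)). unfold lam in *. lra.
  - fold de. replace (de * (4 * lmax / A) * X ^ 2 + 64 / 49 * X ^ 2 / lam)
      with ((de * (4 * lmax / A) * L ^ 2 + 64 / 49 * L ^ 2 / lam) * (tb - ta) ^ 2)
      by (unfold X; field; lra).
    apply HW; try lra.
    + assert (0 < 4 * lmax / A) by (apply Rdiv_lt_0_compat; nra).
      assert (0 < L ^ 2) by (apply pow_lt, HL).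
      assert (0 < 64 / 49 * L ^ 2 / lam) by (apply Rdiv_lt_0_compat; lra).
      assert (0 < de * (4 * lmax / A) * L ^ 2)
        by (apply Rmult_lt_0_compat; [apply Rmult_lt_0_compat|]; lra).
      lra.
    + intros T HT. destruct (Hcmp T ltac:(lra)) as [HTlo _].
      apply window_kinetic_uniform; try lra. apply Hlen; lra.
Qed.

Lemma gap_time_abs_le t1 t2 th lmax lmin : 0 <= t1 <= 1 -> 0 <= t2 <= 1 -> 0 <= th <= 2 * PI ->
  0 < lmin -> (forall t, 0 <= t <= 1 -> lmin <= 2 * PI * sigma t <= lmax) ->
  (L * Rabs (t1 - t2)) ^ 2 <= A * lmin / 16 -> (L * Rabs (t1 - t2)) ^ 2 <= lmin ^ 3 / 64 ->
  gap t1 th t2 th <=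
    4 * sqrt (sqrt lmax) * sqrt (L * Rabs (t1 - t2)) + 2 * (L * Rabs (t1 - t2)) * sqrt (lmax / A).
Proof.
  intros Ht1 Ht2 Hth Hlmin Hlen HX1 HX2.
  destruct (Rtotal_order t1 t2) as [Hlt|[<-|Hgt]].
  - rewrite Rabs_minus_sym, Rabs_right in * by lra. apply gap_time_le with lmin; auto; lra.
  - replace (gap t1 th t1 th) with 0
      by (unfold gap; rewrite !Rminus_eq_0, pow_i, Rplus_0_l, sqrt_0 by lia; reflexivity).
    rewrite Rminus_eq_0, Rabs_R0, Rmult_0_r, sqrt_0. lra.
  - rewrite Rabs_right in * by lra. rewrite gap_sym. apply gap_time_le with lmin; auto; lra.
Qed.

Lemma dist2_le lmax lmin :
  (forall t, 0 <= t <= 1 -> len c t <= lmax) ->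
  (forall t, 0 <= t <= 1 -> lmin <= len c t) ->
  (exists t, 0 <= t <= 1 /\ len c t = lmin) ->
  forall t1 t2 th1 th2,
    0 <= t1 <= 1 -> 0 <= t2 <= 1 ->
    0 <= th1 <= 2 * PI -> 0 <= th2 <= 2 * PI ->
    Rabs (t1 - t2) <= Rmin (2 * sqrt (A * lmin)) (Rpower lmin (3 / 2)) / (8 * L) ->
    dist2 (c t1 th1) (c t2 th2) <=
      lmax / (2 * PI) * Rabs (th1 - th2)
      + 7 * (Rpower lmax (3 / 4) * Rpower A (- (1 / 4)) + Rpower lmax (1 / 4))
          * sqrt (L * Rabs (t1 - t2)).
Proof.
  intros Hmax Hmin [t0 [Ht0 Hl0]] t1 t2 th1 th2 Ht1 Ht2 Hth1 Hth2 Hdt. pose proof PI_RGT_0.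
  assert (Hlen : forall t, 0 <= t <= 1 -> lmin <= 2 * PI * sigma t <= lmax)
    by (intros t Ht; rewrite <- len_eq_sigma by exact Ht; auto).
  assert (Hlmin : 0 < lmin)
    by (rewrite <- Hl0, len_eq_sigma by exact Ht0; pose proof (sigma_pos t0 Ht0); nra).
  assert (Hlmax : lmin <= lmax) by (rewrite <- Hl0; auto).
  pose proof (Rabs_pos (t1 - t2)).
  destruct (time_step_small L (Rabs (t1 - t2)) A lmin) as [HX1 HX2]; auto.
  rewrite dist2_eq_gap.
  eapply Rle_trans; [apply (gap_triangle t1 th1 t2 th1 t2 th2)|].
  rewrite Rplus_comm. apply Rplus_le_compat.
  - eapply Rle_trans; [apply gap_th_le, Ht2|].
    apply Rmult_le_compat_r; [apply Rabs_pos|].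
    destruct (Hlen t2 Ht2). apply Rmult_le_reg_l with (2 * PI); [lra|].
    replace (2 * PI * (lmax / (2 * PI))) with lmax by (field; lra). lra.
  - eapply Rle_trans; [apply (gap_time_abs_le t1 t2 th1 lmax lmin); auto|].
    apply time_term_le; [nra | lra | exact HA | nra].
Qed.

End ConstantSpeedFamily.

Theorem corollary3p8 (A L : R) (c : path) (lmax lmin : R) :
  0 < A -> 0 < L ->
  smooth_path c ->
  (forall t, 0 <= t <= 1 -> immersion_at c t) ->
  (forall t s, 0 <= t <= 1 -> speed c t s = len c t / (2 * PI)) ->
  (forall t, 0 <= t <= 1 -> tang_vel c t 0 = 0) ->
  (forall t, 0 <= t <= 1 ->
     RInt (fun s => (1 + A * curv c t s ^ 2) * norm_vel c t s ^ 2 / speed c t s)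
          0 (2 * PI) = L ^ 2) ->
  (forall t, 0 <= t <= 1 -> len c t <= lmax) ->
  (exists t, 0 <= t <= 1 /\ len c t = lmax) ->
  (forall t, 0 <= t <= 1 -> lmin <= len c t) ->
  (exists t, 0 <= t <= 1 /\ len c t = lmin) ->
  forall t1 t2 th1 th2,
    0 <= t1 <= 1 -> 0 <= t2 <= 1 ->
    0 <= th1 <= 2 * PI -> 0 <= th2 <= 2 * PI ->
    Rabs (t1 - t2) <= Rmin (2 * sqrt (A * lmin)) (Rpower lmin (3 / 2)) / (8 * L) ->
    dist2 (c t1 th1) (c t2 th2) <=
      lmax / (2 * PI) * Rabs (th1 - th2)
      + 7 * (Rpower lmax (3 / 4) * Rpower A (- (1 / 4)) + Rpower lmax (1 / 4))
          * sqrt (L * Rabs (t1 - t2)).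
Proof.
  intros HA HL [[Dx [Dx00 HDx]] [[Dy [Dy00 HDy]] Hper]] Himm Hspeed Htang Henergy Hmax _ Hmin Hex.
  exact (dist2_le c Dx Dy Dx00 Dy00 HDx HDy Hper Himm Hspeed Htang A L HA HL Henergy
           lmax lmin Hmax Hmin Hex).
Qed.
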